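(* Let $F$ be a lean multi-clause-set with $n(F) > 0$. Then $\mathrm{minvdeg}(F) \le \mathrm{N}(\sigma(F))$. More precisely, there exists a variable $v \in \mathrm{var}(F)$ with $\mathrm{vdeg}_F(v) \le \mathrm{N}(\sigma(F))$ and $\mathrm{ld}_F(v) \le \sigma(F)$, $\mathrm{ld}_F(\overline{v}) \le \sigma(F)$.
   Context: Literals come with a fixed-point-free involution $x \mapsto \overline{x}$; variables are the positive literals, $\mathrm{var}(x)$ the underlying variable. A clause is a finite set $C$ of literals with $C \cap \overline{C} = \emptyset$. A multi-clause-set is a map $F$ from clauses to $\mathbb{N}_0$ with finitely many clauses of nonzero multiplicity; its underlying clause-set is the set of clauses with nonzero multiplicity. $\mathrm{var}(F)$ is the set of variables occurring in it, $n(F) = |\mathrm{var}(F)|$, $c(F) = \sum_C F(C)$, $\delta(F) = c(F) - n(F)$. Literal degree $\mathrm{ld}_F(x) = \sum_{C \ni x} F(C)$; $\mathrm{vdeg}_F(v) = \mathrm{ld}_F(v) + \mathrm{ld}_F(\overline{v})$; $\mathrm{minvdeg}(F) = \min_{v \in \mathrm{var}(F)} \mathrm{vdeg}_F(v)$ (and $+\infty$ if $n(F)=0$). Surplus: if $n(F) > 0$, $\sigma(F) = \min_{\emptyset \ne V \subseteq \mathrm{var}(F)} \big( \sum_{C : \mathrm{var}(C) \cap V \ne \emptyset} F(C) - |V| \big)$, and $\sigma(F) = 0$ if $n(F)=0$. A partial assignment is a map $\varphi : V \to \{0,1\}$ for a finite set $V$ of variables, with $\varphi(\overline{v}) = 1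 - \varphi(v)$; it is an autarky for a clause-set $G$ if every clause $C \in G$ containing a literal falsified by $\varphi$ also contains a literal satisfied by $\varphi$. A clause-set $G$ is lean if there is no autarky $\varphi$ for $G$ with $\mathrm{var}(\varphi) \cap \mathrm{var}(G) \ne \emptyset$; a multi-clause-set is lean iff its underlying clause-set is. The function $\mathrm{N} : \mathbb{N} \to \mathbb{N}$ is defined by $\mathrm{N}(1) = 2$ and $\mathrm{N}(k) = \max_{i \in \{2,\dots,k\}} \min(2i, \mathrm{N}(k-i+1)+i)$ for $k \ge 2$. *)

From HB Require Import structures.
From mathcomp Require Import all_boot all_order all_algebra.
From mathcomp Require Import finmap.
Set Implicit Arguments. Unset Strict Implicit. Unset Printing Implicit Defensive.
Import Order.TTheory GRing.Theory Num.Theory.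

Local Open Scope fset_scope.

(* A literal is a pair (v, b): (v, true) is
   the positive literal v (identified with the variable), (v, false) is its
   complement. *)
Definition var := nat.
Definition lit := (nat * bool)%type.
Definition compl (x : lit) : lit := (x.1, ~~ x.2).
Definition var_of (x : lit) : var := x.1.
Definition poslit (v : var) : lit := (v, true).
Definition neglit (v : var) : lit := (v, false).

Definition clause := {fset lit}.
Definition clause_ok (C : clause) : Prop :=
  forall x, x \in C -> compl x \notin C.

(* A multi-clause-set is a finite multiset of clauses, represented by a list;
   the multiplicity F(C) is [count_mem C F].  Its underlying clause-set is the
   set of list members. *)
Definition mcls := seq clause.
Definition is_mcls (F : mcls) : Prop := forall C, C \in F -> clause_ok C.

Definition mult (F : mcls) (C : clause) : nat := count_mem C F.

Definition varsC (C : clause) : {fset var} := [fset var_of x | x in C].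
Definition vars (F : mcls) : {fset var} := \bigcup_(C <- F) varsC C.

Definition nvar (F : mcls) : nat := #|` vars F|.
Definition ncl (F : mcls) : nat := size F.   (* c(F) = sum of multiplicities *)
Definition deficiency (F : mcls) : int := (ncl F)%:Z - (nvar F)%:Z.

Definition ld (F : mcls) (x : lit) : nat := count (fun C => x \in C) F.
Definition vdeg (F : mcls) (v : var) : nat := ld F (poslit v) + ld F (neglit v).

Definition surplus_of (F : mcls) (V : {fset var}) : int :=
  (count (fun C => varsC C `&` V != fset0) F)%:Z - (#|` V|)%:Z.
Definition surplus (F : mcls) : int :=
  if nvar F == 0%N then 0%R
  else \big[Order.min/surplus_of F (vars F)]_(V <- enum_fset (fpowerset (vars F)) | V != fset0)
         surplus_of F V.

(* partial assignments: a finite domain dom with values f on it *)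
Definition sat_lit (dom : {fset var}) (f : var -> bool) (x : lit) : bool :=
  (var_of x \in dom) && (f (var_of x) == x.2).
Definition fals_lit (dom : {fset var}) (f : var -> bool) (x : lit) : bool :=
  (var_of x \in dom) && (f (var_of x) != x.2).

Definition autarky (dom : {fset var}) (f : var -> bool) (F : mcls) : Prop :=
  forall C, C \in F ->
    (exists2 x, x \in C & fals_lit dom f x) ->
    exists2 y, y \in C & sat_lit dom f y.

Definition lean (F : mcls) : Prop :=
  forall dom f, autarky dom f F -> dom `&` vars F = fset0.

(* The function N : N -> N; N(1) = 2, N(k) = max_{2<=i<=k} min(2i, N(k-i+1)+i).
   Implemented with fuel; fuel k suffices for argument k >= 1.
   (Nfun 0 = 0 is a junk value; N is only defined on positive integers.) *)
Fixpoint Naux (fuel k : nat) : nat :=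
  match fuel with
  | 0 => 0
  | fuel'.+1 =>
      if k <= 1 then 2
      else \max_(2 <= i < k.+1) minn (2 * i) (Naux fuel' (k - i + 1) + i)
  end.
Definition Nfun (k : nat) : nat := Naux k k.

(* Hall's theorem turns a matching of clauses to distinct variables into an autarky, so in a
   lean clause-set every nonempty set [T] of variables meets more than [|T|] clauses; the
   surplus [s] is the least excess.  Take a tight set [V0], meeting exactly [|V0| + s]
   clauses, of minimal size.  Matching arguments on [V0] show that every literal on [V0]
   occurs at most [s] times, and that deleting the clauses containing a literal [x] on
   [v \in V0] leaves [V0 \ {v}] lean with surplus at most [s - ld x + 1].  By induction
   [V0 \ {v}] contains a variable of degree at most [N (s - ld x + 1) + ld x], while [v] has
   degree at most [2 ld x] when [x] is its more frequent literal; the recursion defining [N]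
   says that one of the two degrees is at most [N s]. *)

From mathcomp Require Import all_boot all_order all_algebra.
From mathcomp Require Import finmap.
From mathcomp Require Import zify.
From Stdlib Require Import Classical.
From Stdlib Require Wf_nat.
Import Order.TTheory.
Set Implicit Arguments. Unset Strict Implicit. Unset Printing Implicit Defensive.

Lemma count_disjoint_le (T : eqType) (s : seq T) (a b c : pred T) :
  {in s, forall x, a x -> ~~ b x} -> {in s, forall x, a x || b x -> c x} ->
  count a s + count b s <= count c s.
Proof.
elim: s => //= x s IH ab abc.
have := IH (fun y ys => ab y (@mem_behead _ (x :: s) y ys))
           (fun y ys => abc y (@mem_behead _ (x :: s) y ys)).
have := ab x (mem_head _ _); have := abc x (mem_head _ _).
by case: (a x) (b x) (c x) => [] [] [] /=; lia.
Qed.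

Lemma count_split_le (T : Type) (a b c : pred T) (s : seq T) :
  (forall x, a x -> b x || c x) -> count a s <= count (predI a b) s + count (predI a c) s.
Proof.
move=> abc; apply: leq_trans (sub_count (a2 := predU (predI a b) (predI a c)) _ s) _.
  by move=> x /= ax; rewrite ax; apply: abc.
by rewrite -count_predUI leq_addr.
Qed.

Lemma ex_argmin (T : Type) (m : T -> nat) (P : T -> Prop) :
  (exists a, P a) -> exists a, P a /\ forall b, P b -> m a <= m b.
Proof.
move=> [a Pa].
have [k [[[b [Pb <-]] b_min] _]] := @Wf_nat.dec_inh_nat_subset_has_unique_least_element
  (fun k => exists b, P b /\ m b = k) (fun k => classic _)
  (ex_intro _ _ (ex_intro _ a (conj Pa erefl))).
by exists b; split => // c Pc; apply/ssrnat.leP; apply: b_min; exists c.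
Qed.

Lemma Naux_fuel f1 f2 k : 0 < k -> k <= f1 -> k <= f2 -> Naux f1 k = Naux f2 k.
Proof.
elim: f1 f2 k => [|f1 IH] [|f2] k //= k_gt0 le_k1 le_k2; try lia.
case: ifP => // _; apply: eq_big_nat => i /andP [le2i leik].
congr (minn _ (_ + _)); apply: IH; lia.
Qed.

Lemma Nfun1 : Nfun 1 = 2. Proof. by []. Qed.

Lemma Nfun_rec k : 1 < k ->
  Nfun k = \max_(2 <= i < k.+1) minn (2 * i) (Nfun (k - i + 1) + i).
Proof.
case: k => [|k] // k_gt1; rewrite /Nfun /= ifF; last by lia.
apply: eq_big_nat => i /andP [le2i leik].
congr (minn _ (_ + _)); apply: Naux_fuel; lia.
Qed.

Lemma leq_Nfun_term k i : 2 <= i <= k ->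
  minn (2 * i) (Nfun (k - i + 1) + i) <= Nfun k.
Proof.
move=> /andP [le2i leik]; rewrite (@Nfun_rec k); last by lia.
apply: (leq_bigmax_seq (F := fun i => minn (2 * i) (Nfun (k - i + 1) + i))) => //.
rewrite mem_index_iota; lia.
Qed.

Lemma ltn_Nfun k : 0 < k -> k < Nfun k.
Proof.
case: k => [|[|k]] // _.
have := @leq_Nfun_term k.+2 k.+2 (ltac:(lia)).
by rewrite subnn add0n Nfun1; lia.
Qed.

Lemma Nfun_split k i : 0 < k -> i <= k ->
  (2 * i <= Nfun k) \/ (Nfun (k - i + 1) + i <= Nfun k).
Proof.
move=> k_gt0 leik; have := ltn_Nfun k_gt0.
case: (leqP i 1) => [le_i1|lt1i] ltkN; first by left; lia.
have := @leq_Nfun_term k i (ltac:(lia)); rewrite geq_min => /orP[]; tauto.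
Qed.

Lemma leq_Nfun_succ k : 0 < k -> Nfun k <= Nfun k.+1.
Proof.
elim: k {-2}k (leqnn k) => [|n IH] k lekn k_gt0; first lia.
case: k lekn k_gt0 => [|[|k]] // lekn _.
  by rewrite Nfun1; exact: ltnW (ltn_Nfun _).
rewrite (@Nfun_rec k.+2) //.
apply/bigmax_leqP_seq => i; rewrite mem_index_iota => /andP [le2i leik] _.
apply: leq_trans (@leq_Nfun_term k.+3 i (ltac:(lia))).
have : Nfun (k.+2 - i + 1) <= Nfun (k.+2 - i + 1).+1 by apply: IH; lia.
have -> : k.+3 - i + 1 = (k.+2 - i + 1).+1 by lia.
lia.
Qed.

Lemma leq_Nfun a b : 0 < a -> a <= b -> Nfun a <= Nfun b.
Proof.
move=> a_gt0; elim: b => [|b IH] leab; first lia.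
case: (ltngtP a b.+1) => [ltab | | -> //]; last lia.
apply: leq_trans (IH _) (leq_Nfun_succ _); lia.
Qed.

Local Open Scope fset_scope.
Local Open Scope nat_scope.

Implicit Types (F K : mcls) (C : clause) (x y : lit) (v w : var)
  (V W T U D A : {fset var}) (f : var -> bool) (s : nat).

Definition meets (T : {fset var}) (C : clause) : bool := varsC C `&` T != fset0.
Definition nmeet (F : mcls) (T : {fset var}) : nat := count (meets T) F.
Definition confined (W U : {fset var}) (C : clause) : bool := varsC C `&` W `<=` U.
Definition satisfies (D : {fset var}) (f : var -> bool) (C : clause) : Prop :=
  exists2 y, y \in C & sat_lit D f y.
(* Hall's condition for matching the clauses of [K] to distinct variables of [W]; a clause
   matched to a variable is satisfied by setting that variable to the literal it has there. *)
Definition hall_cond (W : {fset var}) (K : mcls) : Prop :=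
  forall U, U `<=` W -> count (confined W U) K <= #|`U|.

Lemma meetsP T C : reflect (exists2 y, y \in C & var_of y \in T) (meets T C).
Proof.
apply: (iffP (fset0Pn _)) => [[u]|[y yC yT]].
  by rewrite in_fsetI => /andP [/imfsetP [y /= yC ->] yT]; exists y.
by exists (var_of y); rewrite in_fsetI yT andbT; apply: in_imfset.
Qed.

Lemma confinedP W U C :
  reflect (forall y, y \in C -> var_of y \in W -> var_of y \in U) (confined W U C).
Proof.
apply: (iffP (@fsubsetP _ _ _)) => [sub y yC yW | sub u].
  by apply: sub; rewrite in_fsetI yW andbT; apply: in_imfset.
by rewrite in_fsetI => /andP [/imfsetP [y /= yC ->] yW]; apply: sub.
Qed.

Lemma meets_lit T x C : x \in C -> var_of x \in T -> meets T C.
Proof. by move=> xC xT; apply/meetsP; exists x. Qed.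

Lemma meetsS Z T C : Z `<=` T -> meets Z C -> meets T C.
Proof. by move=> sZT /meetsP [y yC yZ]; apply: meets_lit yC (fsubsetP sZT _ yZ). Qed.

Lemma confined0 W C : confined W fset0 C = ~~ meets W C.
Proof. by rewrite /confined fsubset0 negbK. Qed.

Lemma satisfies_glue U W f1 f2 C : U `<=` W ->
  satisfies U f1 C \/ satisfies (W `\` U) f2 C ->
  satisfies W (fun u => if u \in U then f1 u else f2 u) C.
Proof.
move=> sUW [[y yC /andP [yU fy]] | [y yC /andP [yWU fy]]]; exists y => //.
  by rewrite /sat_lit (fsubsetP sUW _ yU) yU.
by move: yWU; rewrite in_fsetD => /andP [/negbTE yU yW]; rewrite /sat_lit yW yU.
Qed.

Section Hall.

Variable W : {fset var}.

Lemma hall_cond_confined K U : hall_cond W K -> U `<=` W ->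
  hall_cond U [seq C <- K | confined W U C].
Proof.
move=> hK sUW U' sU'U; rewrite count_filter.
apply: leq_trans (hK U' (fsubset_trans sU'U sUW)); apply: sub_count => C /=.
by move=> /andP [/confinedP inU' /confinedP inU]; apply/confinedP => y yC /(inU y yC); apply: inU'.
Qed.

Lemma hall_cond_tight_rest K U : hall_cond W K -> U `<=` W ->
  count (confined W U) K = #|`U| ->
  hall_cond (W `\` U) [seq C <- K | ~~ confined W U C].
Proof.
move=> hK sUW tightU U2 sU2; rewrite count_filter.
have sUU2 : U `|` U2 `<=` W.
  by rewrite fsubUset sUW (fsubset_trans sU2 (fsubsetDl _ _)).
have := hK _ sUU2; rewrite cardfsU.
suff : count (predI (confined (W `\` U) U2) (fun C => ~~ confined W U C)) K +
       count (confined W U) K <= count (confined W (U `|` U2)) K by lia.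
apply: count_disjoint_le => C _.
  by move=> /andP [].
move=> /orP [/andP [/confinedP inU2 notinU] | /confinedP inU]; apply/confinedP => y yC yW;
  rewrite in_fsetU; last by rewrite inU.
case: (boolP (var_of y \in U)) => //= yU.
by apply: inU2 => //; rewrite in_fsetD yU.
Qed.

Lemma hall_cond_drop C0 K w : w \in W -> hall_cond W (C0 :: K) ->
  (forall U, U `<=` W -> U != fset0 -> U != W ->
     count (confined W U) (C0 :: K) < #|`U|) ->
  hall_cond (W `\ w) K.
Proof.
move=> wW hK slack U sU.
have cardW := cardfsD1 w W; rewrite wW add1n in cardW.
have wU : w \notin U by move: sU; rewrite fsubsetD1 => /andP [].
case: (eqVneq U (W `\ w)) => [-> | UW'].
  have := hK W (fsubset_refl _); rewrite (eq_count (a2 := predT)) ?count_predT /=.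
    by move=> sizeK; apply: leq_trans (count_size _ _) _; rewrite -ltnS -add1n -cardW.
  by move=> C; apply/confinedP.
have sUw : w |` U `<=` W.
  by rewrite fsubUset fsub1set wW (fsubset_trans sU (fsubsetDl _ _)).
have Uw0 : w |` U != fset0 by apply/fset0Pn; exists w; rewrite fset1U1.
have UwW : w |` U != W.
  apply: contraNneq UW' => UwE; rewrite eqEfsubset sU /= -UwE.
  by rewrite fsubDset fsubset_refl.
have := slack _ sUw Uw0 UwW; rewrite cardfsU1 wU /=.
have : count (confined (W `\ w) U) K <= count (confined W (w |` U)) K.
  apply: sub_count => C /confinedP inU; apply/confinedP => y yC yW.
  rewrite in_fset1U; case: eqP => //= /eqP yw; apply: inU yC _.
  by rewrite in_fsetD1 yw.
by case: (confined W (w |` U) C0) => /=; lia.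
Qed.

Lemma hall_cond_witness C0 K : hall_cond W (C0 :: K) ->
  exists2 y, y \in C0 & var_of y \in W.
Proof.
move=> /(_ fset0 (fsub0set _)); rewrite cardfs0 /= confined0.
by case: (boolP (meets W C0)) => // /meetsP.
Qed.

End Hall.

Theorem hall n W K : #|`W| <= n -> hall_cond W K ->
  exists f, forall C, C \in K -> satisfies W f C.
Proof.
elim: n W K => [|n IH] W K leWn; (case: K => [|C0 K] hK; first by exists xpredT);
  have [y0 y0C y0W] := hall_cond_witness hK.
  by move: leWn; rewrite leqn0 cardfs_eq0 => /eqP W0; rewrite W0 in y0W.
set K0 := C0 :: K in hK *.
(* Either a nonempty proper [U] is critical, and the problem splits along it, or no subset
   is, and the first clause can be matched to any of its variables. *)
case: (boolP (has (fun U => [&& U != fset0, U != W & count (confined W U) K0 == #|`U|])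
                  (fpowerset W))).
  move=> /hasP [U]; rewrite fpowersetE => sUW /and3P [U0 UW /eqP tightU].
  have ltUW : #|`U| < #|`W| by apply: fproper_ltn_card; rewrite fproperEneq UW.
  have U_gt0 : 0 < #|`U| by rewrite cardfs_gt0.
  have [f1 sat1] := IH U _ (ltac:(lia)) (hall_cond_confined hK sUW).
  have [f2 sat2] := IH (W `\` U) _ (ltac:(rewrite cardfsDS //; lia))
                      (hall_cond_tight_rest hK sUW tightU).
  exists (fun u => if u \in U then f1 u else f2 u) => C CK0; apply: satisfies_glue => //.
  by case: (boolP (confined W U C)) => inU; [left; apply: sat1 | right; apply: sat2];
    rewrite mem_filter ?inU.
move=> /hasPn no_tight.
have slack U : U `<=` W -> U != fset0 -> U != W -> count (confined W U) K0 < #|`U|.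
  move=> sUW U0 UW; rewrite ltn_neqAle hK // andbT.
  by have := no_tight U; rewrite fpowersetE sUW U0 UW => /(_ isT) /=.
set w := var_of y0 in y0W.
have [f sat] := IH (W `\ w) K (ltac:(rewrite (cardfsD1 w) y0W in leWn; lia))
                  (hall_cond_drop y0W hK slack).
exists (fun u => if u \in [fset w] then y0.2 else f u) => C.
rewrite inE => /orP [/eqP -> | CK]; apply: satisfies_glue; rewrite ?fsub1set //.
  by left; exists y0; rewrite // /sat_lit in_fset1 !eqxx.
by right; apply: sat.
Qed.

(* An autarky with domain [D] is the same as an assignment on [D] satisfying every clause
   that meets [D]. *)
Definition lean_on (F : mcls) (V : {fset var}) : Prop :=
  forall D f, D `<=` V -> D != fset0 ->
  ~ (forall C, C \in F -> meets D C -> satisfies D f C).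

Lemma lean_onS F V V' : V' `<=` V -> lean_on F V -> lean_on F V'.
Proof. by move=> sV'V leanV D f sDV'; apply: leanV; apply: fsubset_trans sV'V. Qed.

Lemma lean_lean_on F : lean F -> lean_on F (vars F).
Proof.
move=> leanF D f sDV /eqP D0 satD; apply: D0.
rewrite -(fsetIidPl sDV); apply: leanF => C CF [x xC /andP [xD _]].
exact: satD CF (meets_lit xC xD).
Qed.

Lemma count_confined_meets_le F T A :
  count (predI (confined T A) (meets T)) F + nmeet F (T `\` A) <= nmeet F T.
Proof.
apply: count_disjoint_le => C _.
  move=> /andP [/confinedP inA _]; apply/meetsP => -[y yC].
  by rewrite in_fsetD => /andP [/negP yA yT]; apply: yA; apply: inA.
by move=> /orP [/andP [] // | /meetsS]; apply; apply: fsubsetDl.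
Qed.

Lemma nmeet_filter_notin_le F x W V : W `<=` V -> var_of x \in V ->
  nmeet [seq C <- F | x \notin C] W + ld F x <= nmeet F V.
Proof.
move=> sWV xV; rewrite /nmeet count_filter; apply: count_disjoint_le => C _.
  by move=> /andP [].
by move=> /orP [/andP [/meetsS -> //] | /meets_lit]; apply.
Qed.

Lemma card_lt_nmeet F V T : lean_on F V -> T `<=` V -> T != fset0 ->
  #|`T| < nmeet F T.
Proof.
move=> leanV; move: {2}#|`T| (leqnn #|`T|) => n.
elim: n T => [|n IH] T leTn sTV T0; first by move: leTn T0; rewrite leqn0 cardfs_eq0 => ->.
rewrite ltnNge; apply/negP => le_nmeet.
suff /(hall (leqnn _)) [f satf] : hall_cond T (filter (meets T) F).
  by apply: (leanV T f sTV T0) => C CF TC; apply: satf; rewrite mem_filter TC.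
move=> U sUT; rewrite count_filter.
have [-> | U0] := eqVneq U fset0.
  rewrite (eq_count (a2 := pred0)) ?count_pred0 // => C /=.
  by rewrite confined0 andNb.
have cardZ := cardfsDS sUT; have leUT := fsubset_leq_card sUT.
have U_gt0 : 0 < #|`U| by rewrite cardfs_gt0.
have := count_confined_meets_le F T U.
have [Z0 | Z_gt0] := posnP #|`T `\` U|; first lia.
have /(IH (T `\` U)) : #|`T `\` U| <= n by lia.
by rewrite -cardfs_gt0 Z_gt0 (fsubset_trans (fsubsetDl _ _) sTV) => /(_ isT isT); lia.
Qed.

(* The surplus of [F] relative to [V]; for [V = vars F] this is the paper's sigma. *)
Definition is_surplus (F : mcls) (V : {fset var}) (s : nat) : Prop :=
  (forall T, T `<=` V -> T != fset0 -> #|`T| + s <= nmeet F T) /\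
  exists T, [/\ T `<=` V, T != fset0 & nmeet F T = #|`T| + s].

Lemma is_surplus_exists F V : lean_on F V -> V != fset0 -> exists s, is_surplus F V s.
Proof.
move=> leanV V0.
have [T [[sTV T0] T_min]] := @ex_argmin _ (fun T => nmeet F T - #|`T|)
  (fun T => T `<=` V /\ T != fset0) (ex_intro _ V (conj (fsubset_refl V) V0)).
have T_lt := card_lt_nmeet leanV.
exists (nmeet F T - #|`T|); split; last by exists T; split => //; have := T_lt T sTV T0; lia.
by move=> T' sT'V T'0; have := T_min T' (conj sT'V T'0); have := T_lt T' sT'V T'0; lia.
Qed.

Lemma is_surplus_gt0 F V s : lean_on F V -> is_surplus F V s -> 0 < s.
Proof.
by move=> leanV [_ [T [sTV T0 tightT]]]; have := card_lt_nmeet leanV sTV T0; lia.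
Qed.

Lemma surplusE F s : 0 < nvar F -> is_surplus F (vars F) s -> surplus F = (s%:Z)%R.
Proof.
move=> nvar_gt0 [s_le [T [sTV T0 tightT]]].
have V0 : vars F != fset0 by rewrite -cardfs_gt0.
rewrite /surplus ifF; last by apply/negbTE; rewrite -lt0n.
have surplus_ofE T' : surplus_of F T' = ((nmeet F T')%:Z - (#|`T'|)%:Z)%R by [].
apply/eqP; rewrite eq_le; apply/andP; split.
  apply: (@bigmin_inf_seq _ _ _ _ _ T); rewrite ?fpowersetE //.
  by rewrite surplus_ofE tightT; lia.
rewrite big_seq_cond; apply: le_bigmin => [|T'].
  by rewrite surplus_ofE; have := s_le _ (fsubset_refl _) V0; lia.
by rewrite fpowersetE => /andP [sT'V T'0]; rewrite surplus_ofE; have := s_le _ sT'V T'0; lia.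
Qed.

Lemma mcls_not_both F C v : is_mcls F -> C \in F -> ~~ ((poslit v \in C) && (neglit v \in C)).
Proof. by move=> HF CF; apply/andP => -[/(HF C CF) /negP]. Qed.

Lemma vdeg_le_nmeet1 F v : is_mcls F -> vdeg F v <= nmeet F [fset v].
Proof.
move=> HF; apply: count_disjoint_le => C CF.
  by move=> pC; move: (mcls_not_both v HF CF); rewrite pC.
by move=> /orP [] /meets_lit; apply; rewrite in_fset1.
Qed.

Lemma vdeg_filter_notin_le F x w : is_mcls F ->
  vdeg F w <= vdeg [seq C <- F | x \notin C] w + ld F x.
Proof.
move=> HF.
have split_ld y : ld F y <= ld [seq C <- F | x \notin C] y +
                           count (fun C => (y \in C) && (x \in C)) F.
  by rewrite /ld count_filter; apply: count_split_le => C _; rewrite orNb.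
have : count (fun C => (poslit w \in C) && (x \in C)) F +
       count (fun C => (neglit w \in C) && (x \in C)) F <= ld F x.
  apply: (@count_disjoint_le clause) => C CF; last by move=> /orP [] /andP [].
  by move=> /andP [pC _]; move: (mcls_not_both w HF CF); rewrite pC /= => /negbTE ->.
by have := split_ld (poslit w); have := split_ld (neglit w); rewrite /vdeg; lia.
Qed.

Lemma vdeg_le_double_ld F v : exists b, vdeg F v <= 2 * ld F (v, b).
Proof.
exists (ld F (neglit v) <= ld F (poslit v)); rewrite /vdeg mul2n -addnn.
by case: (leqP (ld F (neglit v)) (ld F (poslit v))) => [le | /ltnW le];
  [rewrite leq_add2l | rewrite leq_add2r].
Qed.

Lemma ex_minimal_tight F V s : is_surplus F V s ->
  exists V0, [/\ V0 `<=` V, V0 != fset0, nmeet F V0 = #|`V0| + s &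
    forall T, T `<=` V0 -> T != fset0 -> #|`T| < #|`V0| -> #|`T| + s < nmeet F T].
Proof.
move=> [s_le tight_ex].
have [V0 [[sV0V V00 tightV0] V0_min]] := @ex_argmin {fset var} (fun T => #|`T|)
  (fun T => [/\ T `<=` V, T != fset0 & nmeet F T = #|`T| + s]) tight_ex.
exists V0; split => // T sTV0 T0 ltTV0.
have sTV := fsubset_trans sTV0 sV0V.
rewrite ltn_neqAle s_le // andbT; apply/eqP => tightT.
by have := V0_min T (And3 sTV T0 (esym tightT)); lia.
Qed.

Section MinimalTight.

Variables (F : mcls) (V0 : {fset var}) (s : nat).
Hypothesis HF : is_mcls F.
Hypothesis V0ne : V0 != fset0.
Hypothesis leanV0 : lean_on F V0.
Hypothesis tightV0 : nmeet F V0 = #|`V0| + s.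
Hypothesis minV0 : forall T, T `<=` V0 -> T != fset0 -> #|`T| < #|`V0| ->
  #|`T| + s < nmeet F T.

(* The clauses of [F] confined to [v |` U] and those meeting [Z = V0 `\` (v |` U)] are
   disjoint clauses meeting [V0]; since [Z] is a proper subset, minimality of [V0] leaves room
   for at most [|U|] of the former.  If [Z] is empty, the excess [ld F x > s] does the job. *)
Lemma tight_hall_cond x D : var_of x \in V0 -> D `<=` V0 `\ var_of x ->
  (D != fset0) || (s < ld F x) ->
  hall_cond ((V0 `\` D) `\ var_of x)
            [seq C <- F | [&& meets V0 C, ~~ meets D C & x \notin C]].
Proof.
set v := var_of x => vV0 sD Dbig U sU; rewrite count_filter.
have sDV0 : D `<=` V0 := fsubset_trans sD (fsubsetDl _ _).
have [vU sUV0D] : v \notin U /\ U `<=` V0 `\` D by move: sU; rewrite fsubsetD1 => /andP [].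
have sUV0 : U `<=` V0 := fsubset_trans sUV0D (fsubsetDl _ _).
have svUV0 : v |` U `<=` V0 by rewrite fsubUset fsub1set vV0.
have cardZ := cardfsDS svUV0; have le_vU := fsubset_leq_card svUV0.
have cardvU : #|`v |` U| = 1 + #|`U| by rewrite cardfsU1 vU.
have [Z0 | Z_gt0] := posnP #|`V0 `\` (v |` U)|.
  have D0 : D = fset0.
    apply/eqP; rewrite -cardfs_eq0 -leqn0 -Z0; apply: fsubset_leq_card.
    apply/fsubsetP => u uD; rewrite in_fsetD (fsubsetP sDV0 _ uD) andbT in_fset1U negb_or.
    move: (fsubsetP sD _ uD); rewrite in_fsetD1 => /andP [-> _] /=.
    by apply: contraL uD => /(fsubsetP sUV0D); rewrite in_fsetD => /andP [].
  rewrite D0 eqxx /= in Dbig.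
  apply: (@leq_trans (nmeet [seq C <- F | x \notin C] V0)).
    by rewrite /nmeet count_filter; apply: sub_count => C /= /andP [_ /and3P [-> _ ->]].
  have := nmeet_filter_notin_le F (fsubset_refl V0) vV0; lia.
apply: (@leq_trans (count (predI (confined V0 (v |` U)) (meets V0)) F)).
  apply: sub_count => C /= /andP [/confinedP inU /and3P [V0C notDC _]].
  rewrite V0C andbT; apply/confinedP => y yC yV0; rewrite in_fset1U.
  case: eqP => //= /eqP yv; apply: (inU _ yC).
  rewrite in_fsetD1 yv in_fsetD yV0 andbT /=.
  by apply: contra notDC; apply: meets_lit.
have ltZ : #|`V0 `\` (v |` U)| < #|`V0| by lia.
have Z0 : V0 `\` (v |` U) != fset0 by rewrite -cardfs_gt0.
have := minV0 (fsubsetDl _ _) Z0 ltZ.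
have := count_confined_meets_le F V0 (v |` U).
lia.
Qed.

Lemma tight_no_autarky x D f1 : var_of x \in V0 -> D `<=` V0 `\ var_of x ->
  (D != fset0) || (s < ld F x) ->
  (forall C, C \in F -> x \notin C -> meets D C -> satisfies D f1 C) -> False.
Proof.
set v := var_of x => vV0 sD Dbig satD.
have [f2 sat2] := hall (leqnn _) (tight_hall_cond vV0 sD Dbig).
have sDV0 : D `<=` V0 := fsubset_trans sD (fsubsetDl _ _).
have vD : v \notin D by move: sD; rewrite fsubsetD1 => /andP [].
have svV0D : [fset v] `<=` V0 `\` D by rewrite fsub1set in_fsetD vD vV0.
apply: (leanV0 (f := fun u => if u \in D then f1 u else if u \in [fset v] then x.2 else f2 u)
          (fsubset_refl _) V0ne) => C CF V0C.
apply: satisfies_glue sDV0 _.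
have [xC | xC] := boolP (x \in C).
  by right; apply: satisfies_glue svV0D _; left; exists x; rewrite // /sat_lit in_fset1 !eqxx.
have [DC | DC] := boolP (meets D C); first by left; apply: satD.
right; apply: satisfies_glue svV0D _; right; apply: sat2.
by rewrite mem_filter CF V0C DC xC.
Qed.

Lemma tight_ld_le x : var_of x \in V0 -> ld F x <= s.
Proof.
move=> xV0; rewrite leqNgt; apply/negP => ld_gt.
apply: (@tight_no_autarky x fset0 xpredT xV0 (fsub0set _)); first by rewrite ld_gt orbT.
by move=> C _ _; rewrite /meets fsetI0 eqxx.
Qed.

Lemma tight_lean_on_filter x : var_of x \in V0 ->
  lean_on [seq C <- F | x \notin C] (V0 `\ var_of x).
Proof.
move=> xV0 D f1 sD D0 satD; apply: (tight_no_autarky xV0 sD); first by rewrite D0.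
by move=> C CF xC; apply: satD; rewrite mem_filter xC.
Qed.

Lemma tight_surplus_gt0 : 0 < s.
Proof. by have := card_lt_nmeet leanV0 (fsubset_refl _) V0ne; lia. Qed.

Lemma tight_singleton_vdeg_le v : V0 = [fset v] -> vdeg F v <= Nfun s.
Proof.
move=> V0E; apply: leq_trans (vdeg_le_nmeet1 v HF) _.
by rewrite -V0E tightV0 {1}V0E cardfs1; apply: ltn_Nfun tight_surplus_gt0.
Qed.

Lemma tight_filter_surplus_le x s' : var_of x \in V0 -> V0 `\ var_of x != fset0 ->
  is_surplus [seq C <- F | x \notin C] (V0 `\ var_of x) s' -> s' + ld F x <= s + 1.
Proof.
move=> xV0 W0 [s'_le _]; have := s'_le _ (fsubset_refl _) W0.
have := nmeet_filter_notin_le F (fsubsetDl V0 [fset var_of x]) xV0.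
by have := cardfsD1 (var_of x) V0; rewrite xV0 add1n; lia.
Qed.

Lemma minimal_tight_low_degree :
  (forall H W s', is_mcls H -> lean_on H W -> W != fset0 -> #|`W| < #|`V0| ->
     is_surplus H W s' -> exists2 w, w \in W & vdeg H w <= Nfun s') ->
  exists2 v, v \in V0 & [/\ vdeg F v <= Nfun s, ld F (poslit v) <= s & ld F (neglit v) <= s].
Proof.
move=> IH.
suff [u uV0 deg_u] : exists2 u, u \in V0 & vdeg F u <= Nfun s.
  by exists u => //; split => //; apply: tight_ld_le.
have [v vV0] := fset0Pn _ V0ne.
have [b deg_v] := vdeg_le_double_ld F v.
set x : lit := (v, b) in deg_v.
have ld_x : ld F x <= s := tight_ld_le (x := x) vV0.
have [W0 | W_gt0] := posnP #|`V0 `\ v|.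
  exists v => //; apply: tight_singleton_vdeg_le; apply/eqP.
  by rewrite eq_sym eqEfcard fsub1set vV0 cardfs1 (cardfsD1 v) vV0 W0.
have W0 : V0 `\ v != fset0 by rewrite -cardfs_gt0.
set H := [seq C <- F | x \notin C].
have leanH : lean_on H (V0 `\ v) := tight_lean_on_filter (x := x) vV0.
have HH : is_mcls H by move=> C; rewrite mem_filter => /andP [_ /HF].
have [s' hs'] := is_surplus_exists leanH W0.
have [w wW deg_w] := IH H _ s' HH leanH W0 (fproper_ltn_card (fproperD1 vV0)) hs'.
have le_s' := tight_filter_surplus_le (x := x) vV0 W0 hs'.
have deg_w_F : vdeg F w <= Nfun (s - ld F x + 1) + ld F x.
  apply: leq_trans (vdeg_filter_notin_le x w HF) _; rewrite leq_add2r.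
  by apply: leq_trans deg_w (leq_Nfun (is_surplus_gt0 leanH hs') _); lia.
have [le2 | leN] := Nfun_split tight_surplus_gt0 ld_x.
  by exists v => //; apply: leq_trans deg_v le2.
by exists w; [apply: fsubsetP (fsubsetDl _ _) _ wW | apply: leq_trans deg_w_F leN].
Qed.

End MinimalTight.

Lemma lean_on_low_degree n F V s : #|`V| <= n -> is_mcls F -> lean_on F V ->
  V != fset0 -> is_surplus F V s ->
  exists2 v, v \in V &
    [/\ vdeg F v <= Nfun s, ld F (poslit v) <= s & ld F (neglit v) <= s].
Proof.
elim: n F V s => [|n IH] F V s leVn HF leanV Vne hs.
  by move: leVn Vne; rewrite leqn0 cardfs_eq0 => ->.
have [V0 [sV0V V00 tightV0 minV0]] := ex_minimal_tight hs.
have leV0V := fsubset_leq_card sV0V.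
have [H W s' HH leanH W0 ltW hs' | v vV0 deg_v] :=
  minimal_tight_low_degree HF V00 (lean_onS sV0V leanV) tightV0 minV0.
  have [|w wW [deg_w _ _]] := IH H W s' _ HH leanH W0 hs'; first lia.
  by exists w.
by exists v => //; apply: (fsubsetP sV0V).
Qed.

Local Close Scope fset_scope.
Local Open Scope ring_scope.

Theorem theorem9p10 (F : mcls) (HF : is_mcls F) (Hlean : lean F)
  (Hn : (0 < nvar F)%N) :
  exists2 v, v \in vars F &
    [/\ (vdeg F v <= Nfun `|surplus F|%N)%N,
        (ld F (poslit v))%:Z <= surplus F
      & (ld F (neglit v))%:Z <= surplus F].
Proof.
have Vne : (vars F != fset0)%fset by rewrite -cardfs_gt0.
have leanV := lean_lean_on Hlean.
have [s hs] := is_surplus_exists leanV Vne.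
have [v vV [deg_v ld_pos ld_neg]] := lean_on_low_degree (leqnn _) HF leanV Vne hs.
by exists v; rewrite // (surplusE Hn hs) absz_nat !lez_nat.
Qed.
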